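(* Let $X$ be a compact topological space, let $D\subseteq X$ with $D\neq\emptyset$, let $\overline{D}$ be the closure of $D$ in $X$, and put $\partial D:=\overline{D}\setminus D$. Let $Y$ be a Hausdorff topological space and let $f\colon\overline{D}\to Y$ be a continuous map such that $f(D)$ is open in $Y$. Let $E$ and $F$ be connected subsets of $Y$, let $\overline{F}$ denote the closure of $F$ in $Y$, and write $S^{c}:=Y\setminus S$ for $S\subseteq Y$. Then: (I) If $f(D)\subseteq E\subseteq f(\partial D)^{c}$, then $f(D)=E$. (II) If $E\subseteq f(\partial D)^{c}\subseteq E\cup F$, $f(D)\subseteq F^{c}$, and $f(\partial D)\subseteq \overline{F}$, then $f(D)=E$; moreover $E\neq\emptyset$, $E\cap F=\emptyset$, and $f(D)\subseteq f(\partial D)^{c}$. (III) If $f(\partial D)^{c}=E\cup F$, $F\not\subseteq f(D)$, and $f(\partial D)\subseteq\overline{F}$, then $f(D)=E$; moreover $E\neq\emptyset$, $F\neq\emptyset$, $E\cap F=\emptyset$, and $f(D)\subseteq f(\partial D)^{c}$.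
   Context: Note that $\partial D$ is defined as $\overline{D}\setminus D$; complements are taken in $Y$. *)

From HB Require Import structures.
From mathcomp Require Import all_boot all_order all_algebra.
From mathcomp Require Import all_classical all_reals all_analysis.
Set Implicit Arguments. Unset Strict Implicit. Unset Printing Implicit Defensive.
Local Open Scope classical_set_scope.

Definition bdry (X : topologicalType) (D : set X) : set X := closure D `\` D.

From HB Require Import structures.
From mathcomp Require Import all_boot all_order all_algebra.
From mathcomp Require Import all_classical all_reals all_analysis.
Set Implicit Arguments. Unset Strict Implicit. Unset Printing Implicit Defensive.
Local Open Scope classical_set_scope.

(* f(closure D) is compact, hence closed in the Hausdorff space Y, and off
   f(∂D) it coincides with the open set f(D).  So any connected set avoiding
   f(∂D) and meeting f(D) meets f(D) in a relatively clopen set and lies in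
   f(D).  For (II) and (III), the open set f(D) misses F, hence misses its
   closure, which contains f(∂D). *)

Lemma connected_sub_clopen_trace (T : topologicalType) (G A C : set T) :
  connected G -> open A -> closed C -> G `&` A = G `&` C ->
  G `&` A !=set0 -> G `<=` A.
Proof.
move=> cG oA cC GAC GA0.
have <- : G `&` A = G by apply: cG => //; [exists A | exists C].
by move=> y [].
Qed.

Lemma open_disjoint_closure (T : topologicalType) (A F : set T) :
  open A -> A `<=` ~` F -> A `<=` ~` closure F.
Proof.
move=> oA AF y Ay Fy.
have [z [Fz Az]] := Fy A (open_nbhs_nbhs (conj oA Ay)).
exact: AF z Az Fz.
Qed.

Lemma setI_image_closure_bdry (X Y : topologicalType) (D : set X) (f : X -> Y)
    (G : set Y) :
  G `<=` ~` (f @` bdry D) -> G `&` f @` D = G `&` f @` closure D.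
Proof.
move=> GB; apply/seteqP; split=> y [Gy [x Dx fxy]]; split=> //.
  by exists x => //; exact: subset_closure.
have [|nDx] := pselect (D x); first by exists x.
by case: (GB _ Gy); exists x.
Qed.

Section boundary_image.
Variables (X Y : topologicalType) (D : set X) (f : X -> Y).
Hypotheses (cX : compact [set: X]) (D0 : D !=set0) (hY : hausdorff_space Y).
Hypotheses (cf : {within closure D, continuous f}) (oD : open (f @` D)).

Let B := ~` (f @` bdry D).

Lemma closed_image_closure : closed (f @` closure D).
Proof.
apply: compact_closed => //; apply: continuous_compact => //.
exact: subclosed_compact (@closed_closure _ D) cX (@subsetT _ _).
Qed.

Lemma connected_sub_image (G : set Y) :
  connected G -> G `<=` B -> G `&` f @` D !=set0 -> G `<=` f @` D.
Proof.
move=> cG GB; apply: (connected_sub_clopen_trace cG oD closed_image_closure).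
exact: setI_image_closure_bdry.
Qed.

Lemma image_eq_connected_superset (E : set Y) :
  connected E -> f @` D `<=` E -> E `<=` B -> f @` D = E.
Proof.
move=> cE DE EB; apply/seteqP; split=> //; apply: connected_sub_image => //.
by have [y Dy] := image_nonempty f D0; exists y; split=> //; exact: DE.
Qed.

Lemma image_sub_compl_image_bdry (F : set Y) :
  f @` D `<=` ~` F -> f @` bdry D `<=` closure F -> f @` D `<=` B.
Proof.
move=> DF BF y Dy By.
exact: open_disjoint_closure oD DF y Dy (BF y By).
Qed.

Lemma image_eq_connected_component (E F : set Y) :
  connected E -> E `<=` B -> B `<=` E `|` F -> f @` D `<=` ~` F ->
  f @` bdry D `<=` closure F ->
  [/\ f @` D = E, E !=set0, E `&` F = set0 & f @` D `<=` B].
Proof.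
move=> cE EB BEF DF BF.
have DB := image_sub_compl_image_bdry DF BF.
have DE : f @` D `<=` E.
  by move=> y Dy; case: (BEF y (DB y Dy)) => // Fy; case: (DF y Dy).
have fDE := image_eq_connected_superset cE DE EB.
split=> //; first by rewrite -fDE; exact: (image_nonempty f D0).
by rewrite -fDE; apply/seteqP; split=> // y [Dy Fy]; exact: DF y Dy Fy.
Qed.

Lemma image_eq_connected_partition (E F : set Y) :
  connected E -> connected F -> B = E `|` F -> ~ (F `<=` f @` D) ->
  f @` bdry D `<=` closure F ->
  [/\ f @` D = E, E !=set0, F !=set0, E `&` F = set0 & f @` D `<=` B].
Proof.
move=> cE cF BEF nFD BF.
have DF : f @` D `<=` ~` F.
  move=> y Dy Fy; apply: nFD; apply: connected_sub_image => //.
    by rewrite BEF => z Fz; right.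
  by exists y.
have F0 : F !=set0.
  by apply/set0P/eqP => F0; apply: nFD; rewrite F0; exact: sub0set.
have [] := @image_eq_connected_component E F cE _ _ DF BF.
- by rewrite BEF => y Ey; left.
- by rewrite BEF.
- by [].
Qed.

End boundary_image.

Theorem mainTheorem3 (X Y : topologicalType) (D : set X) (f : X -> Y)
  (E F : set Y) :
  compact [set: X] -> D !=set0 -> hausdorff_space Y ->
  {within closure D, continuous f} -> open (f @` D) ->
  connected E -> connected F ->
  (* (I) *)
  ((f @` D `<=` E /\ E `<=` ~` (f @` bdry D)) -> f @` D = E) /\
  (* (II) *)
  ((E `<=` ~` (f @` bdry D) /\ ~` (f @` bdry D) `<=` E `|` F /\
    f @` D `<=` ~` F /\ f @` bdry D `<=` closure F) ->
   f @` D = E /\ E !=set0 /\ E `&` F = set0 /\ f @` D `<=` ~` (f @` bdry D)) /\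
  (* (III) *)
  ((~` (f @` bdry D) = E `|` F /\ ~ (F `<=` f @` D) /\ f @` bdry D `<=` closure F) ->
   f @` D = E /\ E !=set0 /\ F !=set0 /\ E `&` F = set0 /\
   f @` D `<=` ~` (f @` bdry D)).
Proof.
move=> cX D0 hY cf oD cE cF; split; [|split].
- by move=> [DE EB]; exact: image_eq_connected_superset.
- move=> [EB [BEF [DF BF]]].
  by have [] := image_eq_connected_component cX D0 hY cf oD cE EB BEF DF BF.
- move=> [BEF [nFD BF]].
  by have [] := image_eq_connected_partition cX D0 hY cf oD cE cF BEF nFD BF.
Qed.
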